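(* Let $x_*\in\Omega$, $R>0$, $c:=\|F(x_* )\|$, $\beta:=\|F'(x_* )^\dagger\|$, $\kappa:=\sup\{t\in[0,R):B(x_*,t)\subset\Omega\}$. Suppose $F'(x_* )^*F(x_* )=0$, $F'(x_* )$ is injective, and there is $K>0$ with $\alpha:=\sqrt2c\beta^2K<1$ and $\|F'(x)-F'(y)\|\le K\|x-y\|$ for all $x,y\in B(x_*,\kappa)$. Take $0\le\omega_2<\omega_1$ with $\omega_1\alpha+\omega_2<1$ and let $$r:=\min\Big\{\kappa,\ \frac{2(1-\omega_2)-2\sqrt2cK\beta^2\omega_1}{\beta K(2+\omega_1-2\omega_2)}\Big\}.$$ Then for $x_0\in B(x_*,r)\setminus\{x_*\}$ the iteration $x_{k+1}=x_k+S_k$, $B(x_k)S_k=-F'(x_k)^*F(x_k)$, where each $B(x_k):\mathbb X\to\mathbb X$ is invertible bounded linear with $\|B(x_k)^{-1}F'(x_k)^*F'(x_k)\|\le\omega_1$ and $\|B(x_k)^{-1}F'(x_k)^*F'(x_k)-I\|\le\omega_2$, is well defined, contained in $B(x_*,r)$, converges to $x_*$, and for all $k\ge0$, $$\|x_{k+1}-x_*\|\le\frac{\beta\omega_1K}{2(1-\beta K\|x_0-x_*\|)}\|x_k-x_*\|^2+\Big(\frac{\omega_1\sqrt2c\beta^2K}{1-\beta K\|x_0-x_*\|}+\omega_2\Big)\|x_k-x_*\|.$$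
   Context: $\mathbb X,\mathbb Y$ are real or complex Hilbert spaces, $\Omega\subseteq\mathbb X$ is open, and $F:\Omega\to\mathbb Y$ is continuously differentiable with $F'(x)$ having closed image for every $x\in\Omega$. $A^*$ denotes the adjoint; for a continuous injective linear operator $A$ with closed image, $A^\dagger:=(A^*A)^{-1}A^*$. $B(a,\delta)$ is the open ball. *)

From Stdlib Require Import Reals ClassicalEpsilon.
Open Scope R_scope.

Record HilbertSpace := MkHilbert {
  hcar :> Type;
  hzero : hcar;
  hadd : hcar -> hcar -> hcar;
  hopp : hcar -> hcar;
  hscal : R -> hcar -> hcar;
  hinner : hcar -> hcar -> R;
  hadd_assoc : forall x y z, hadd x (hadd y z) = hadd (hadd x y) z;
  hadd_comm : forall x y, hadd x y = hadd y x;
  hadd_0 : forall x, hadd hzero x = x;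
  hadd_opp : forall x, hadd (hopp x) x = hzero;
  hscal_assoc : forall a b x, hscal a (hscal b x) = hscal (a * b) x;
  hscal_1 : forall x, hscal 1 x = x;
  hscal_distr_l : forall a x y, hscal a (hadd x y) = hadd (hscal a x) (hscal a y);
  hscal_distr_r : forall a b x, hscal (a + b) x = hadd (hscal a x) (hscal b x);
  hinner_sym : forall x y, hinner x y = hinner y x;
  hinner_add : forall x y z, hinner (hadd x y) z = hinner x z + hinner y z;
  hinner_scal : forall a x y, hinner (hscal a x) y = a * hinner x y;
  hinner_pos : forall x, 0 <= hinner x x;
  hinner_def : forall x, hinner x x = 0 -> x = hzero;
  hcomplete : forall u : nat -> hcar,
    (forall eps, eps > 0 -> exists N, forall m n, (N <= m)%nat -> (N <= n)%nat ->
       sqrt (hinner (hadd (u m) (hopp (u n))) (hadd (u m) (hopp (u n)))) < eps) ->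
    exists l, forall eps, eps > 0 -> exists N, forall n, (N <= n)%nat ->
       sqrt (hinner (hadd (u n) (hopp l)) (hadd (u n) (hopp l))) < eps
}.

Arguments hzero {h}.
Arguments hadd {h} _ _.
Arguments hopp {h} _.
Arguments hscal {h} _ _.
Arguments hinner {h} _ _.

Definition hsub {X : HilbertSpace} (x y : X) : X := hadd x (hopp y).
Definition hnorm {X : HilbertSpace} (x : X) : R := sqrt (hinner x x).

Definition ball {X : HilbertSpace} (a : X) (d : R) (x : X) : Prop :=
  hnorm (hsub x a) < d.

Definition is_open {X : HilbertSpace} (O : X -> Prop) : Prop :=
  forall x, O x -> exists d, d > 0 /\ forall y, ball x d y -> O y.

Definition is_linear {X Y : HilbertSpace} (A : X -> Y) : Prop :=
  (forall x y, A (hadd x y) = hadd (A x) (A y)) /\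
  (forall a x, A (hscal a x) = hscal a (A x)).

Definition is_bounded_linear {X Y : HilbertSpace} (A : X -> Y) : Prop :=
  is_linear A /\ exists M, forall x, hnorm (A x) <= M * hnorm x.

Definition opnorm {X Y : HilbertSpace} (A : X -> Y) : R :=
  epsilon (inhabits 0)
    (fun m => is_lub (fun t => exists x, hnorm x <= 1 /\ t = hnorm (A x)) m).

Definition adjoint {X Y : HilbertSpace} (A : X -> Y) : Y -> X :=
  fun y => epsilon (inhabits hzero) (fun z => forall x, hinner (A x) y = hinner x z).

(* A^dagger := (A^* A)^{-1} A^* : dagger A y is the z with A^* A z = A^* y *)
Definition dagger {X Y : HilbertSpace} (A : X -> Y) : Y -> X :=
  fun y => epsilon (inhabits hzero) (fun z => adjoint A (A z) = adjoint A y).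

Definition injective_op {X Y : HilbertSpace} (A : X -> Y) : Prop :=
  forall x y, A x = A y -> x = y.

Definition closed_image {X Y : HilbertSpace} (A : X -> Y) : Prop :=
  forall y, (forall eps, eps > 0 -> exists x, hnorm (hsub y (A x)) < eps) ->
  exists x, y = A x.

Definition C1_on {X Y : HilbertSpace} (O : X -> Prop) (F : X -> Y)
  (F' : X -> X -> Y) : Prop :=
  (forall x, O x ->
     is_bounded_linear (F' x) /\
     forall eps, eps > 0 -> exists d, d > 0 /\ forall h, hnorm h < d ->
       hnorm (hsub (hsub (F (hadd x h)) (F x)) (F' x h)) <= eps * hnorm h) /\
  (forall x, O x -> forall eps, eps > 0 -> exists d, d > 0 /\
     forall y, O y -> hnorm (hsub y x) < d ->
       opnorm (fun h => hsub (F' y h) (F' x h)) <= eps).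

Definition kappa {X : HilbertSpace} (xs : X) (Rr : R) (O : X -> Prop) : R :=
  epsilon (inhabits 0)
    (fun m => is_lub (fun t => 0 <= t < Rr /\ forall y, ball xs t y -> O y) m).

Definition converges_to {X : HilbertSpace} (u : nat -> X) (l : X) : Prop :=
  forall eps, eps > 0 -> exists N, forall n, (N <= n)%nat -> hnorm (hsub (u n) l) < eps.

(* Write e_k = x_k - xs, A = F'(x_k) and M = B(x_k)^-1 A^T A (A^T the adjoint).  Since
   B(x_k) S_k = -A^T F(x_k), the error satisfies e_{k+1} = (I - M) e_k - M u + M u', where u and u'
   are least-squares solutions of A u = F(xs) and A u' = D, with D = F(xs) - F(x_k) - A (xs - x_k)
   a Taylor remainder.  The Lipschitz bound on F' gives |D| <= K/2 |e_k|^2 (mean value theorem for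
   s |-> <F(x_k + s (xs - x_k)), y>).  F'(xs) is bounded below by 1/beta (an injective operator with
   closed range is bounded below, by a Baire category argument), and A is a (K |e_k|)-perturbation
   of it, so |u'| <= beta K/2 |e_k|^2 / (1 - beta K |e_k|).  The hypothesis F'(xs)^T F(xs) = 0 makes
   u small as well: |u| <= beta^2 c K |e_k| / (1 - beta K |e_k|), even without the factor sqrt 2 of
   the statement.  While |e_k| <= |e_0| this bounds |e_{k+1}| by q |e_k| with
   q = w1 beta K |e_0| / (2 (1 - beta K |e_0|)) + w1 alpha / (1 - beta K |e_0|) + w2, and the choice
   of r is exactly what makes q < 1. *)

From Stdlib Require Import Reals Lra Psatz ClassicalEpsilon Classical.
Open Scope R_scope.

Arguments hadd_assoc {h}. Arguments hadd_comm {h}. Arguments hadd_0 {h}.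
Arguments hadd_opp {h}. Arguments hscal_assoc {h}. Arguments hscal_1 {h}.
Arguments hscal_distr_l {h}. Arguments hscal_distr_r {h}. Arguments hinner_sym {h}.
Arguments hinner_add {h}. Arguments hinner_scal {h}. Arguments hinner_pos {h}.
Arguments hinner_def {h}. Arguments hcomplete {h}.

(** * Vectors, inner products and norms *)

Section VectorAlgebra.
Context {X : HilbertSpace}.
Implicit Types x y z : X.

Lemma hadd_0r x : hadd x hzero = x.
Proof. rewrite hadd_comm; apply hadd_0. Qed.

Lemma hadd_oppr x : hadd x (hopp x) = hzero.
Proof. rewrite hadd_comm; apply hadd_opp. Qed.

Lemma hadd_cancel x y z : hadd x y = hadd x z -> y = z.
Proof.
  intros H. rewrite <- (hadd_0 y), <- (hadd_0 z), <- (hadd_opp x), <- !hadd_assoc, H.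
  reflexivity.
Qed.

Lemma hscal_0l x : hscal 0 x = hzero.
Proof.
  apply (hadd_cancel (hscal 0 x)). rewrite <- hscal_distr_r, hadd_0r. f_equal; ring.
Qed.

Lemma hopp_scal x : hopp x = hscal (-1) x.
Proof.
  apply (hadd_cancel x). rewrite hadd_oppr. rewrite <- (hscal_1 x) at 1.
  rewrite <- hscal_distr_r. replace (1 + -1) with 0 by ring. symmetry; apply hscal_0l.
Qed.

Lemma hsub_diag x : hsub x x = hzero.
Proof. apply hadd_oppr. Qed.

Lemma hsub_add_cancel x y : hadd (hsub x y) y = x.
Proof. unfold hsub. rewrite <- hadd_assoc, hadd_opp, hadd_0r. reflexivity. Qed.

Lemma hsub_eq0 x y : hsub x y = hzero -> x = y.
Proof. intros H. rewrite <- (hsub_add_cancel x y), H. apply hadd_0. Qed.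

Lemma hinner_addr x y z : hinner x (hadd y z) = hinner x y + hinner x z.
Proof. rewrite !(hinner_sym x), hinner_add; reflexivity. Qed.

Lemma hinner_scalr a x y : hinner x (hscal a y) = a * hinner x y.
Proof. rewrite !(hinner_sym x), hinner_scal; reflexivity. Qed.

Lemma hinner_0l x : hinner hzero x = 0.
Proof. rewrite <- (hscal_0l hzero), hinner_scal. ring. Qed.

Lemma hinner_0r x : hinner x hzero = 0.
Proof. rewrite hinner_sym; apply hinner_0l. Qed.

Lemma hinner_oppr x y : hinner x (hopp y) = - hinner x y.
Proof. rewrite hopp_scal, hinner_scalr. ring. Qed.

Lemma hinner_subl x y z : hinner (hsub x y) z = hinner x z - hinner y z.
Proof. unfold hsub. rewrite hinner_add, hopp_scal, hinner_scal. ring. Qed.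

Lemma hinner_subr x y z : hinner x (hsub y z) = hinner x y - hinner x z.
Proof. unfold hsub. rewrite hinner_addr, hinner_oppr. ring. Qed.

Lemma eq_by_inner x y : (forall z, hinner z x = hinner z y) -> x = y.
Proof. intros H. apply hsub_eq0, hinner_def. rewrite hinner_subr, H. ring. Qed.
End VectorAlgebra.

(* Identities of vector expressions are proved by testing against an arbitrary vector. *)
Ltac vec_eq := apply eq_by_inner; intros ?;
  do 4 rewrite ?hinner_addr, ?hinner_subr, ?hinner_scalr, ?hinner_oppr, ?hinner_0r;
  first [ring | field].

Section Norms.
Context {X : HilbertSpace}.
Implicit Types x y z : X.

Lemma hnorm_ge0 x : 0 <= hnorm x.
Proof. apply sqrt_pos. Qed.

Lemma hnorm_sq x : hnorm x * hnorm x = hinner x x.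
Proof. apply sqrt_sqrt, hinner_pos. Qed.

Lemma hnorm_zero : hnorm (@hzero X) = 0.
Proof. unfold hnorm. rewrite hinner_0l. apply sqrt_0. Qed.

Lemma hnorm_eq0 x : hnorm x = 0 -> x = hzero.
Proof. intros H. apply hinner_def. rewrite <- hnorm_sq, H. ring. Qed.

Lemma hnorm_scal a x : hnorm (hscal a x) = Rabs a * hnorm x.
Proof.
  unfold hnorm. rewrite hinner_scal, hinner_scalr, <- Rmult_assoc, sqrt_mult_alt by nra.
  rewrite <- sqrt_Rsqr_abs. reflexivity.
Qed.

Lemma hnorm_opp x : hnorm (hopp x) = hnorm x.
Proof. rewrite hopp_scal, hnorm_scal, Rabs_left by lra. ring. Qed.

Lemma hnorm_sub_sym x y : hnorm (hsub x y) = hnorm (hsub y x).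
Proof. rewrite <- hnorm_opp. f_equal. vec_eq. Qed.

Lemma hnorm_sq_add x y : hnorm (hadd x y) * hnorm (hadd x y) =
  hnorm x * hnorm x + 2 * hinner x y + hnorm y * hnorm y.
Proof. rewrite !hnorm_sq, hinner_add, !hinner_addr, (hinner_sym y x). ring. Qed.

Lemma hnorm_sq_sub x y : hnorm (hsub x y) * hnorm (hsub x y) =
  hnorm x * hnorm x - 2 * hinner x y + hnorm y * hnorm y.
Proof. rewrite !hnorm_sq, hinner_subl, !hinner_subr, (hinner_sym y x). ring. Qed.

Lemma hinner_sq_le x y : hinner x y * hinner x y <= hinner x x * hinner y y.
Proof.
  destruct (Req_dec (hinner y y) 0) as [H0|H0].
  - apply hinner_def in H0. subst y. rewrite !hinner_0r. lra.
  - set (t := hinner x y / hinner y y).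
    pose proof (hinner_pos y).
    pose proof (hinner_pos (hsub x (hscal t y))) as P.
    rewrite hinner_subl, !hinner_subr, !hinner_scal, !hinner_scalr, (hinner_sym y x) in P.
    replace (hinner x x - t * hinner x y - (t * hinner x y - t * (t * hinner y y)))
      with ((hinner x x * hinner y y - hinner x y * hinner x y) / hinner y y) in P
      by (unfold t; field; lra).
    apply Rmult_le_compat_r with (r := hinner y y) in P; [|lra].
    unfold Rdiv in P. rewrite Rmult_0_l, Rmult_assoc, Rinv_l, Rmult_1_r in P; lra.
Qed.

Lemma hinner_abs_le x y : Rabs (hinner x y) <= hnorm x * hnorm y.
Proof.
  pose proof (hinner_sq_le x y) as H. rewrite <- !hnorm_sq in H.
  pose proof (hnorm_ge0 x); pose proof (hnorm_ge0 y).
  rewrite <- (Rabs_pos_eq (hnorm x * hnorm y)) by nra.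
  apply Rsqr_le_abs_0. unfold Rsqr. nra.
Qed.

Lemma hinner_le x y : hinner x y <= hnorm x * hnorm y.
Proof. eapply Rle_trans; [apply Rle_abs | apply hinner_abs_le]. Qed.

Lemma hnorm_triangle x y : hnorm (hadd x y) <= hnorm x + hnorm y.
Proof.
  pose proof (hinner_le x y). pose proof (hnorm_sq_add x y).
  pose proof (hnorm_ge0 (hadd x y)). pose proof (hnorm_ge0 x); pose proof (hnorm_ge0 y).
  nra.
Qed.

Lemma hnorm_sub_le x y : hnorm (hsub x y) <= hnorm x + hnorm y.
Proof. rewrite <- (hnorm_opp y). apply hnorm_triangle. Qed.

Lemma hnorm_chain x y z : hnorm (hsub x z) <= hnorm (hsub x y) + hnorm (hsub y z).
Proof. replace (hsub x z) with (hadd (hsub x y) (hsub y z)) by vec_eq. apply hnorm_triangle. Qed.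

Lemma hnorm_rev_triangle x y : hnorm x - hnorm y <= hnorm (hsub x y).
Proof. pose proof (hnorm_triangle (hsub x y) y). rewrite hsub_add_cancel in H. lra. Qed.
End Norms.

(** * Completeness and orthogonal projection *)

Lemma inv_succ_vanish (c : R) :
  forall eps, eps > 0 -> exists N, forall n, (N <= n)%nat -> c / (INR n + 1) < eps.
Proof.
  intros eps Heps. destruct (INR_unbounded (c / eps)) as [N HN]. exists N.
  intros n Hn. apply le_INR in Hn. pose proof (pos_INR N).
  apply Rmult_lt_reg_r with (r := INR n + 1); [lra|].
  unfold Rdiv. rewrite Rmult_assoc, Rinv_l, Rmult_1_r by lra.
  unfold Rdiv in HN. apply Rmult_lt_compat_r with (r := eps) in HN; [|lra].
  rewrite Rmult_assoc, Rinv_l, Rmult_1_r in HN by lra. nra.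
Qed.

Lemma le_of_le_add_inv (a b c : R) : (forall n, a <= b + c / (INR n + 1)) -> a <= b.
Proof.
  intros H. apply Rle_plus_epsilon. intros eps Heps.
  destruct (inv_succ_vanish c eps Heps) as [N HN].
  specialize (H N). specialize (HN N (Nat.le_refl N)). lra.
Qed.

Lemma geom_vanish (c : R) :
  forall eps, eps > 0 -> exists N, forall n, (N <= n)%nat -> c * (/2) ^ n < eps.
Proof.
  intros eps Heps.
  destruct (pow_lt_1_zero (/2) ltac:(rewrite Rabs_right; lra) (eps / (Rabs c + 1)))
    as [N HN].
  { apply Rdiv_lt_0_compat; [lra|]. pose proof (Rabs_pos c); lra. }
  exists N. intros n Hn. specialize (HN n Hn).
  pose proof (Rabs_pos c). pose proof (Rle_abs c).
  assert (0 <= (/2) ^ n) by (apply pow_le; lra).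
  rewrite Rabs_right in HN by lra.
  apply Rmult_lt_compat_l with (r := Rabs c + 1) in HN; [|lra].
  replace ((Rabs c + 1) * (eps / (Rabs c + 1))) with eps in HN by (field; lra).
  nra.
Qed.

Section Completeness.
Context {X : HilbertSpace}.

Lemma cauchy_limit (u : nat -> X) (b : nat -> R) :
  (forall eps, eps > 0 -> exists N, forall n, (N <= n)%nat -> b n < eps) ->
  (forall n m, (n <= m)%nat -> hnorm (hsub (u n) (u m)) <= b n) ->
  exists l, forall n, hnorm (hsub (u n) l) <= b n.
Proof.
  intros Hb Hu.
  destruct (hcomplete u) as [l Hl].
  { intros eps Heps. destruct (Hb eps Heps) as [N HN]. exists N.
    intros m n Hm Hn. change (hnorm (hsub (u m) (u n)) < eps).
    destruct (Nat.le_ge_cases n m) as [H|H].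
    - rewrite hnorm_sub_sym. eapply Rle_lt_trans; [apply Hu, H | apply HN, Hn].
    - eapply Rle_lt_trans; [apply Hu, H | apply HN, Hm]. }
  exists l. intros n. apply Rle_plus_epsilon. intros eps Heps.
  destruct (Hl eps Heps) as [N HN].
  pose proof (HN (Nat.max n N) (Nat.le_max_r _ _)) as H1.
  pose proof (Hu n (Nat.max n N) (Nat.le_max_l _ _)).
  pose proof (hnorm_chain (u n) (u (Nat.max n N)) l).
  change (hnorm (hsub (u (Nat.max n N)) l) < eps) in H1. lra.
Qed.

Definition closed_subspace (C : X -> Prop) : Prop :=
  C hzero /\ (forall x y, C x -> C y -> C (hadd x y)) /\
  (forall a x, C x -> C (hscal a x)) /\
  (forall y, (forall eps, eps > 0 -> exists z, C z /\ hnorm (hsub y z) < eps) -> C y).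

Section Projection.
Variable C : X -> Prop.
Hypothesis HC : closed_subspace C.
Variable v : X.

Let dist2 (z : X) : R := hnorm (hsub v z) * hnorm (hsub v z).

Lemma dist2_inf : exists d2, (forall z, C z -> d2 <= dist2 z) /\
  forall eps, eps > 0 -> exists z, C z /\ dist2 z < d2 + eps.
Proof.
  destruct HC as [C0 _].
  set (E := fun t => exists z, C z /\ t = - dist2 z).
  assert (Hd0 : forall z, 0 <= dist2 z)
    by (intros z; unfold dist2; pose proof (hnorm_ge0 (hsub v z)); nra).
  destruct (completeness E) as [m [Hub Hlub]].
  { exists 0. intros t [z [_ ->]]. specialize (Hd0 z). lra. }
  { exists (- dist2 hzero). exists hzero. auto. }
  exists (- m). split.
  - intros z Hz. assert (E (- dist2 z)) as HE by (exists z; auto). apply Hub in HE. lra.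
  - intros eps Heps. apply NNPP. intros Hn.
    assert (m <= m - eps); [|lra].
    apply Hlub. intros t [z [Hz ->]]. apply Rnot_lt_le. intros Hlt. apply Hn.
    exists z. split; [auto | lra].
Qed.

Lemma near_min_close (d2 a b : R) (z z' : X) :
  (forall w, C w -> d2 <= dist2 w) -> C z -> C z' ->
  dist2 z <= d2 + a -> dist2 z' <= d2 + b ->
  hnorm (hsub z z') * hnorm (hsub z z') <= 2 * a + 2 * b.
Proof.
  destruct HC as (_ & Cadd & Cscal & _).
  intros Hinf Hz Hz' Ha Hb.
  pose proof (Hinf (hscal (/2) (hadd z z')) (Cscal _ _ (Cadd _ _ Hz Hz'))) as Hmid.
  unfold dist2 in *.
  (* parallelogram law for v - z and v - z' *)
  pose proof (hnorm_sq_add (hsub v z) (hsub v z')) as P1.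
  pose proof (hnorm_sq_sub (hsub v z') (hsub v z)) as P2.
  replace (hadd (hsub v z) (hsub v z')) with (hscal 2 (hsub v (hscal (/2) (hadd z z'))))
    in P1 by vec_eq.
  replace (hsub (hsub v z') (hsub v z)) with (hsub z z') in P2 by vec_eq.
  rewrite hnorm_scal, Rabs_right in P1 by lra.
  rewrite (hinner_sym (hsub v z')) in P2. nra.
Qed.

Lemma min_dist_orthogonal (p : X) : C p -> (forall z, C z -> dist2 p <= dist2 z) ->
  forall z, C z -> hinner (hsub v p) z = 0.
Proof.
  destruct HC as (_ & Cadd & Cscal & _).
  intros Cp Hmin z Hz.
  set (a := hinner (hsub v p) z). set (b := hinner z z).
  assert (Hb : 0 <= b) by apply hinner_pos.
  set (t := a / (b + 1)).
  pose proof (Hmin _ (Cadd _ _ Cp (Cscal t _ Hz))) as Hq. unfold dist2 in Hq.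
  replace (hsub v (hadd p (hscal t z))) with (hsub (hsub v p) (hscal t z)) in Hq by vec_eq.
  rewrite (hnorm_sq_sub (hsub v p) (hscal t z)), hinner_scalr, (hnorm_sq (hscal t z)), hinner_scal,
    hinner_scalr in Hq.
  fold a b in Hq.
  assert (Ht : t * (2 * a - t * b) <= 0) by lra.
  (* the choice t = a/(b+1) makes the left side a positive multiple of a^2 *)
  replace (t * (2 * a - t * b)) with (a * a * ((b + 2) / ((b + 1) * (b + 1)))) in Ht
    by (unfold t; field; lra).
  assert (0 < (b + 2) / ((b + 1) * (b + 1))) by (apply Rdiv_lt_0_compat; nra).
  apply Rsqr_0_uniq. unfold Rsqr. apply Rle_antisym; nra.
Qed.

Lemma dist2_limit_le (d2 : R) (zf : nat -> X) (p : X) :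
  (forall n, dist2 (zf n) < d2 + / (INR n + 1) * / (INR n + 1)) ->
  (forall n, hnorm (hsub (zf n) p) <= 2 / (INR n + 1)) -> dist2 p <= d2.
Proof.
  intros Hzf Hp.
  apply (le_of_le_add_inv _ _ (4 * d2 + 13)). intros n.
  specialize (Hzf n). specialize (Hp n). pose proof (hnorm_chain v (zf n) p).
  unfold dist2, Rdiv in *.
  set (s := hnorm (hsub v p)) in *. set (a := hnorm (hsub v (zf n))) in *.
  set (i := / (INR n + 1)) in *.
  assert (Hi0 : 0 < i) by (apply Rinv_0_lt_compat; pose proof (pos_INR n); lra).
  assert (Hi1 : i <= 1)
    by (unfold i; rewrite <- Rinv_1; apply Rinv_le_contravar; pose proof (pos_INR n); lra).
  assert (Ha0 : 0 <= a) by apply hnorm_ge0. assert (Hs0 : 0 <= s) by apply hnorm_ge0.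
  assert (Hi2 : i * i <= i) by nra.
  assert (Ha : a <= d2 + 2) by nra.
  assert (Hs : s <= a + 2 * i) by lra.
  assert (s * s <= (a + 2 * i) * (a + 2 * i)) by nra.
  assert (a * i <= (d2 + 2) * i) by nra.
  nra.
Qed.

Lemma projection : exists p, C p /\ forall z, C z -> hinner (hsub v p) z = 0.
Proof.
  destruct dist2_inf as [d2 [Hinf Happ]].
  assert (Hseq : forall n : nat, exists z, C z /\ dist2 z < d2 + / (INR n + 1) * / (INR n + 1)).
  { intros n. apply Happ. pose proof (pos_INR n).
    assert (0 < / (INR n + 1)) by (apply Rinv_0_lt_compat; lra). nra. }
  destruct (choice _ Hseq) as [zf Hzf].
  destruct (cauchy_limit zf (fun n => 2 / (INR n + 1))) as [p Hp].
  { apply inv_succ_vanish. }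
  { intros n k Hnk. apply le_INR in Hnk. pose proof (pos_INR n).
    assert (Hkn : / (INR k + 1) <= / (INR n + 1)) by (apply Rinv_le_contravar; lra).
    assert (0 < / (INR k + 1)) by (apply Rinv_0_lt_compat; lra).
    destruct (Hzf n) as [Cn Hn]. destruct (Hzf k) as [Ck Hk].
    pose proof (near_min_close d2 _ _ _ _ Hinf Cn Ck (Rlt_le _ _ Hn) (Rlt_le _ _ Hk)).
    pose proof (hnorm_ge0 (hsub (zf n) (zf k))). unfold Rdiv. nra. }
  assert (Cp : C p).
  { apply (proj2 (proj2 (proj2 HC))). intros eps Heps.
    destruct (inv_succ_vanish 2 eps Heps) as [N HN].
    exists (zf N). split; [apply Hzf|].
    rewrite hnorm_sub_sym. eapply Rle_lt_trans; [apply Hp | apply HN; lia]. }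
  exists p. split; [exact Cp|]. apply min_dist_orthogonal; [exact Cp|].
  intros z Hz. eapply Rle_trans; [|apply Hinf, Hz].
  apply (dist2_limit_le d2 zf p); [apply Hzf | exact Hp].
Qed.
End Projection.
End Completeness.

(** * Bounded operators, Riesz representation and adjoints *)

Section LinearMaps.
Context {X Y : HilbertSpace}.
Implicit Types (A : X -> Y) (x y : X).

Lemma lin_add A x y : is_linear A -> A (hadd x y) = hadd (A x) (A y).
Proof. intros HA. apply (proj1 HA). Qed.

Lemma lin_scal A a x : is_linear A -> A (hscal a x) = hscal a (A x).
Proof. intros HA. apply (proj2 HA). Qed.

Lemma lin_0 A : is_linear A -> A hzero = hzero.
Proof. intros HA. rewrite <- (hscal_0l (@hzero X)), lin_scal, hscal_0l; auto. Qed.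

Lemma lin_opp A x : is_linear A -> hopp (A x) = A (hopp x).
Proof. intros HA. rewrite !hopp_scal, lin_scal; auto. Qed.

Lemma lin_sub A x y : is_linear A -> A (hsub x y) = hsub (A x) (A y).
Proof. intros HA. unfold hsub. rewrite lin_add, lin_opp; auto. Qed.

Lemma bl_norm_le A :
  is_bounded_linear A -> exists M, 0 <= M /\ forall x, hnorm (A x) <= M * hnorm x.
Proof.
  intros [_ [M HM]]. exists (Rabs M). split; [apply Rabs_pos|]. intros x.
  pose proof (HM x). pose proof (Rle_abs M). pose proof (hnorm_ge0 x). nra.
Qed.
End LinearMaps.

Lemma bl_comp {X Y Z : HilbertSpace} (A : X -> Y) (B : Y -> Z) :
  is_bounded_linear A -> is_bounded_linear B -> is_bounded_linear (fun x => B (A x)).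
Proof.
  intros HA HB. destruct (bl_norm_le A HA) as [Ma [HMa0 HMa]].
  destruct (bl_norm_le B HB) as [Mb [HMb0 HMb]].
  split; [split|].
  - intros x y. rewrite !lin_add; auto; [apply HB | apply HA].
  - intros a x. rewrite !lin_scal; auto; [apply HB | apply HA].
  - exists (Mb * Ma). intros x. pose proof (HMb (A x)). pose proof (HMa x). nra.
Qed.

Lemma bl_sub {X Y : HilbertSpace} (A B : X -> Y) : is_bounded_linear A -> is_bounded_linear B ->
  is_bounded_linear (fun x => hsub (A x) (B x)).
Proof.
  intros HA HB. destruct (bl_norm_le A HA) as [Ma [_ HMa]].
  destruct (bl_norm_le B HB) as [Mb [_ HMb]].
  split; [split|].
  - intros x y. rewrite !lin_add by (apply HA || apply HB). vec_eq.
  - intros a x. rewrite !lin_scal by (apply HA || apply HB). vec_eq.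
  - exists (Ma + Mb). intros x. pose proof (HMa x). pose proof (HMb x).
    pose proof (hnorm_sub_le (A x) (B x)). lra.
Qed.

Lemma bl_id {X : HilbertSpace} : is_bounded_linear (fun x : X => x).
Proof. split; [split|]; auto. exists 1. intros; lra. Qed.

Section OperatorNorm.
Context {X Y : HilbertSpace}.
Implicit Types (f : X -> Y) (x : X).

Lemma opnorm_is_lub f B : (forall x, hnorm x <= 1 -> hnorm (f x) <= B) ->
  is_lub (fun t => exists x, hnorm x <= 1 /\ t = hnorm (f x)) (opnorm f).
Proof.
  intros H. unfold opnorm. apply epsilon_spec.
  destruct (completeness (fun t => exists x, hnorm x <= 1 /\ t = hnorm (f x))) as [m Hm].
  - exists B. intros t [x [Hx ->]]. auto.
  - exists (hnorm (f hzero)). exists hzero. rewrite hnorm_zero. split; auto; lra.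
  - exists m; exact Hm.
Qed.

Lemma opnorm_ge f B : (forall x, hnorm x <= 1 -> hnorm (f x) <= B) ->
  forall x, hnorm x <= 1 -> hnorm (f x) <= opnorm f.
Proof. intros H x Hx. apply (opnorm_is_lub f B H). exists x; auto. Qed.

Lemma opnorm_ge0 f B : (forall x, hnorm x <= 1 -> hnorm (f x) <= B) -> 0 <= opnorm f.
Proof.
  intros H. eapply Rle_trans; [apply (hnorm_ge0 (f hzero)) | apply (opnorm_ge f B H)].
  rewrite hnorm_zero; lra.
Qed.

Lemma hnorm_le_opnorm f B : (forall x, hnorm x <= 1 -> hnorm (f x) <= B) ->
  (forall a x, f (hscal a x) = hscal a (f x)) ->
  forall x, hnorm (f x) <= opnorm f * hnorm x.
Proof.
  intros HB Hh x. pose proof (opnorm_ge f B HB) as Hu.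
  destruct (Req_dec (hnorm x) 0) as [H0|H0].
  - apply hnorm_eq0 in H0. subst x.
    rewrite <- (hscal_0l hzero), Hh, !hnorm_scal, Rabs_R0. lra.
  - pose proof (hnorm_ge0 x).
    specialize (Hu (hscal (/ hnorm x) x)).
    rewrite Hh, !hnorm_scal, Rabs_right, Rinv_l in Hu
      by (lra || (apply Rle_ge, Rlt_le, Rinv_0_lt_compat; lra)).
    specialize (Hu (Rle_refl 1)).
    apply Rmult_le_compat_r with (r := hnorm x) in Hu; [|lra].
    rewrite Rmult_comm, <- Rmult_assoc, Rinv_r, Rmult_1_l in Hu by lra. lra.
Qed.

Lemma bl_norm_le_opnorm f w : is_bounded_linear f -> opnorm f <= w ->
  forall x, hnorm (f x) <= w * hnorm x.
Proof.
  intros Hf Hw x. destruct (bl_norm_le f Hf) as [M [HM0 HM]].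
  assert (HB : forall x, hnorm x <= 1 -> hnorm (f x) <= M)
    by (intros y Hy; pose proof (HM y); pose proof (hnorm_ge0 y); nra).
  pose proof (hnorm_le_opnorm f M HB (fun a x => lin_scal f a x (proj1 Hf)) x).
  pose proof (hnorm_ge0 x). nra.
Qed.
End OperatorNorm.

Section Riesz.
Context {X : HilbertSpace}.
Variable phi : X -> R.
Hypothesis phi_add : forall x y, phi (hadd x y) = phi x + phi y.
Hypothesis phi_scal : forall a x, phi (hscal a x) = a * phi x.
Hypothesis phi_bounded : exists M, forall x, Rabs (phi x) <= M * hnorm x.

Lemma functional_sub x y : phi (hsub x y) = phi x - phi y.
Proof. unfold hsub. rewrite phi_add, hopp_scal, phi_scal. ring. Qed.

Lemma kernel_closed_subspace : closed_subspace (fun x => phi x = 0).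
Proof.
  destruct phi_bounded as [M HM].
  repeat split.
  - rewrite <- (hscal_0l hzero), phi_scal. ring.
  - intros x y Hx Hy. rewrite phi_add, Hx, Hy. ring.
  - intros a x Hx. rewrite phi_scal, Hx. ring.
  - intros y Hy.
    enough (Rabs (phi y) <= 0) by
      (pose proof (Rle_abs (phi y)); pose proof (Rle_abs (- phi y)); rewrite Rabs_Ropp in *; lra).
    apply Rle_plus_epsilon. intros eps Heps.
    destruct (Hy (eps / (Rabs M + 1))) as [z [Hz Hyz]].
    { apply Rdiv_lt_0_compat; [lra|]. pose proof (Rabs_pos M); lra. }
    pose proof (HM (hsub y z)). rewrite functional_sub, Hz, Rminus_0_r in H.
    pose proof (Rle_abs M). pose proof (Rabs_pos M). pose proof (hnorm_ge0 (hsub y z)).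
    apply Rmult_lt_compat_l with (r := Rabs M + 1) in Hyz; [|lra].
    replace ((Rabs M + 1) * (eps / (Rabs M + 1))) with eps in Hyz by (field; lra).
    nra.
Qed.

Lemma riesz_representation : exists z, forall x, phi x = hinner x z.
Proof.
  destruct (classic (forall x, phi x = 0)) as [Hz|Hnz].
  { exists hzero. intros x. rewrite Hz, hinner_0r. reflexivity. }
  apply not_all_ex_not in Hnz. destruct Hnz as [x0 Hx0].
  destruct (projection _ kernel_closed_subspace x0) as [p [Cp Hp]].
  (* w is orthogonal to the kernel and not in it *)
  set (w := hsub x0 p).
  assert (Hw : phi w <> 0) by (unfold w; rewrite functional_sub, Cp; lra).
  assert (Hww : hinner w w > 0).
  { destruct (Rle_lt_or_eq_dec _ _ (hinner_pos w)) as [E|E]; [lra|].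
    symmetry in E. apply hinner_def in E. rewrite E in Hw. contradict Hw.
    rewrite <- (hscal_0l hzero), phi_scal. ring. }
  exists (hscal (phi w / hinner w w) w). intros x.
  assert (Hk : phi (hsub x (hscal (phi x / phi w) w)) = 0)
    by (rewrite functional_sub, phi_scal; field; auto).
  specialize (Hp _ Hk). fold w in Hp.
  rewrite hinner_subr, hinner_scalr in Hp.
  rewrite hinner_scalr, (hinner_sym x w).
  assert (hinner w x = phi x / phi w * hinner w w) by lra.
  rewrite H. field. split; lra.
Qed.
End Riesz.

Section Adjoint.
Context {X Y : HilbertSpace}.
Variable A : X -> Y.
Hypothesis HA : is_bounded_linear A.

Lemma adjoint_spec y x : hinner (A x) y = hinner x (adjoint A y).
Proof.
  revert x. unfold adjoint. apply epsilon_spec.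
  destruct (bl_norm_le A HA) as [M [HM0 HM]].
  apply riesz_representation.
  - intros x z. rewrite lin_add, hinner_add by apply HA. reflexivity.
  - intros a x. rewrite lin_scal, hinner_scal by apply HA. reflexivity.
  - exists (M * hnorm y). intros x. eapply Rle_trans; [apply hinner_abs_le|].
    pose proof (HM x). pose proof (hnorm_ge0 y). nra.
Qed.

Lemma adjoint_bl : is_bounded_linear (adjoint A).
Proof.
  destruct (bl_norm_le A HA) as [M [HM0 HM]].
  split; [split|].
  - intros y z. apply eq_by_inner. intros x. rewrite hinner_addr, <- !adjoint_spec, hinner_addr.
    reflexivity.
  - intros a y. apply eq_by_inner. intros x.
    rewrite hinner_scalr, <- !adjoint_spec, hinner_scalr. reflexivity.
  - exists M. intros y. set (z := adjoint A y).
    assert (E : hnorm z * hnorm z <= M * hnorm z * hnorm y).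
    { rewrite hnorm_sq. unfold z. rewrite <- adjoint_spec.
      eapply Rle_trans; [apply hinner_le|].
      pose proof (HM (adjoint A y)). pose proof (hnorm_ge0 y). nra. }
    pose proof (hnorm_ge0 z). pose proof (hnorm_ge0 y).
    destruct (Req_dec (hnorm z) 0) as [E0|E0]; [rewrite E0; nra|].
    apply Rmult_le_reg_l with (r := hnorm z); nra.
Qed.
End Adjoint.

(** * Injective operators with closed range are bounded below *)

Section GeometricSequences.
Context {X : HilbertSpace}.

Lemma geometric_cauchy (u : nat -> X) (c : R) :
  (forall k, hnorm (hsub (u k) (u (S k))) <= c * (/2) ^ k) ->
  exists l, forall n, hnorm (hsub (u n) l) <= 2 * c * (/2) ^ n.
Proof.
  intros Hu.
  assert (Hc : 0 <= c)
    by (pose proof (Hu O); pose proof (hnorm_ge0 (hsub (u O) (u 1%nat))); simpl in *; lra).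
  assert (Hpow : forall k, 0 <= (/2) ^ k) by (intros; apply pow_le; lra).
  apply cauchy_limit.
  - intros eps Heps. destruct (geom_vanish (2 * c) eps Heps) as [N HN]. exists N. auto.
  - intros n m Hnm.
    enough (hnorm (hsub (u n) (u m)) <= 2 * c * ((/2) ^ n - (/2) ^ m))
      by (pose proof (Hpow m); nra).
    induction Hnm.
    + rewrite hsub_diag, hnorm_zero. lra.
    + pose proof (hnorm_chain (u n) (u m) (u (S m))). pose proof (Hu m).
      simpl pow. lra.
Qed.

Lemma zero_of_geometric (v : X) (c : R) : (forall n, hnorm v <= c * (/2) ^ n) -> v = hzero.
Proof.
  intros Hv. apply hnorm_eq0, Rle_antisym; [|apply hnorm_ge0].
  apply Rle_plus_epsilon. intros eps Heps.
  destruct (geom_vanish c eps Heps) as [N HN]. specialize (HN N (Nat.le_refl N)).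
  specialize (Hv N). lra.
Qed.
End GeometricSequences.

Section Baire.
Context {Y : HilbertSpace}.
Variable W : Y -> Prop.
Hypothesis W_closed :
  forall y, (forall eps, eps > 0 -> exists z, W z /\ hnorm (hsub y z) < eps) -> W y.
Variable A : nat -> Y -> Prop.
Hypothesis A_cover : forall y, W y -> exists n, A n y.

Definition dense_in_ball (n : nat) (y0 : Y) (rho : R) : Prop :=
  forall y, W y -> hnorm (hsub y y0) < rho ->
  forall eps, eps > 0 -> exists a, A n a /\ hnorm (hsub y a) < eps.

Lemma shrink_ball (n : nat) (c : Y) (rho : R) :
  W c -> rho > 0 -> ~ dense_in_ball n c (rho / 2) ->
  exists c' rho', W c' /\ rho' > 0 /\ hnorm (hsub c' c) + rho' <= rho /\ rho' <= rho / 2 /\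
    forall z, hnorm (hsub z c') <= rho' -> ~ A n z.
Proof.
  intros Wc Hrho Hnd. unfold dense_in_ball in Hnd.
  apply not_all_ex_not in Hnd as [y Hy].
  apply imply_to_and in Hy as [Wy Hy]. apply imply_to_and in Hy as [Hyc Hy].
  apply not_all_ex_not in Hy as [eps Hy]. apply imply_to_and in Hy as [Heps Hy].
  exists y, (Rmin (eps / 2) (rho / 2)).
  pose proof (Rmin_l (eps / 2) (rho / 2)). pose proof (Rmin_r (eps / 2) (rho / 2)).
  assert (0 < Rmin (eps / 2) (rho / 2)) by (apply Rmin_glb_lt; lra).
  split; [exact Wy|]. split; [lra|]. split; [lra|]. split; [lra|].
  intros z Hz Az. apply Hy. exists z. split; [exact Az|].
  rewrite hnorm_sub_sym. lra.
Qed.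

Lemma nested_balls_limit (c : nat -> Y) (rho : nat -> R) :
  (forall k, hnorm (hsub (c (S k)) (c k)) + rho (S k) <= rho k) ->
  (forall k, 0 <= rho k <= (/2) ^ k) ->
  exists l, forall k, hnorm (hsub (c k) l) <= rho k.
Proof.
  intros Hstep Hrho. apply cauchy_limit.
  - intros eps Heps. destruct (geom_vanish 1 eps Heps) as [N HN]. exists N.
    intros n Hn. specialize (HN n Hn). specialize (Hrho n). lra.
  - intros n m Hnm.
    enough (hnorm (hsub (c m) (c n)) + rho m <= rho n)
      by (rewrite hnorm_sub_sym; pose proof (Hrho m); lra).
    induction Hnm.
    + rewrite hsub_diag, hnorm_zero. lra.
    + pose proof (hnorm_chain (c (S m)) (c m) (c n)). pose proof (Hstep m). lra.
Qed.

Lemma baire (y0 : Y) : W y0 -> exists n c rho, W c /\ rho > 0 /\ dense_in_ball n c rho.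
Proof.
  intros Wy0. apply NNPP. intros Hn.
  assert (Hstep : forall (n : nat) (p : Y * R), exists q : Y * R,
    W (fst p) -> snd p > 0 ->
    W (fst q) /\ snd q > 0 /\ hnorm (hsub (fst q) (fst p)) + snd q <= snd p /\
    snd q <= snd p / 2 /\ forall z, hnorm (hsub z (fst q)) <= snd q -> ~ A n z).
  { intros n [c rho]. simpl.
    destruct (classic (W c /\ rho > 0)) as [[Wc Hr] | Hno].
    - destruct (shrink_ball n c rho Wc Hr) as [c' [rho' H]].
      { intros Hd. apply Hn. exists n, c, (rho / 2). repeat split; auto; lra. }
      exists (c', rho'). auto.
    - exists (c, rho). intros; exfalso; tauto. }
  destruct (choice _ (fun n => choice _ (Hstep n))) as [step Hst].
  set (ball_seq := fix ball_seq (k : nat) : Y * R :=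
    match k with O => (y0, 1) | S k => step k (ball_seq k) end).
  assert (Hinv : forall k, W (fst (ball_seq k)) /\ snd (ball_seq k) > 0).
  { induction k as [|k [Wk Hk]]; simpl; [split; [auto | lra]|].
    destruct (Hst k (ball_seq k) Wk Hk) as [? [? _]]. auto. }
  assert (Hrad : forall k, 0 <= snd (ball_seq k) <= (/2) ^ k).
  { induction k as [|k IHk]; simpl; [lra|].
    destruct (Hinv k) as [Wk Hk]. destruct (Hst k (ball_seq k) Wk Hk) as [_ [? [_ [? _]]]].
    lra. }
  destruct (nested_balls_limit (fun k => fst (ball_seq k)) (fun k => snd (ball_seq k)) ltac:(
    intros k; destruct (Hinv k) as [Wk Hk]; apply (Hst k (ball_seq k) Wk Hk)) Hrad) as [ys Hys].
  assert (Wys : W ys).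
  { apply W_closed. intros eps Heps. destruct (geom_vanish 1 eps Heps) as [N HN].
    exists (fst (ball_seq N)). split; [apply Hinv|].
    rewrite hnorm_sub_sym. specialize (HN N (Nat.le_refl N)). specialize (Hrad N).
    specialize (Hys N). simpl in Hys. lra. }
  destruct (A_cover ys Wys) as [n An].
  destruct (Hinv n) as [Wn Hn0]. destruct (Hst n (ball_seq n) Wn Hn0) as [_ [_ [_ [_ Hfar]]]].
  apply (Hfar ys); [|exact An].
  rewrite hnorm_sub_sym. apply (Hys (S n)).
Qed.
End Baire.

Section BoundedBelow.
Context {X Y : HilbertSpace}.
Variable T : X -> Y.
Hypothesis HT : is_bounded_linear T.
Hypothesis T_closed : closed_image T.

Let range (y : Y) : Prop := exists x, y = T x.

Lemma range_sub y z : range y -> range z -> range (hsub y z).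
Proof. intros [a ->] [b ->]. exists (hsub a b). rewrite lin_sub; auto. apply HT. Qed.

Lemma range_scal a y : range y -> range (hscal a y).
Proof. intros [b ->]. exists (hscal a b). rewrite lin_scal; auto. apply HT. Qed.

Lemma range_dense_near_origin : exists C rho, 0 <= C /\ rho > 0 /\
  forall u, range u -> hnorm u < rho ->
  forall eps, eps > 0 -> exists h, hnorm h <= C /\ hnorm (hsub u (T h)) < eps.
Proof.
  assert (Wclosed : forall y,
    (forall eps, eps > 0 -> exists z, range z /\ hnorm (hsub y z) < eps) -> range y).
  { intros y Hy. apply T_closed. intros eps Heps. destruct (Hy eps Heps) as [z [[x ->] Hz]].
    exists x. exact Hz. }
  assert (Hcover : forall y, range y -> exists n, exists h, hnorm h <= INR n /\ y = T h).
  { intros y [x ->]. destruct (INR_unbounded (hnorm x)) as [n Hn]. exists n, x. split; [lra|auto]. }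
  destruct (baire range Wclosed _ Hcover (T hzero) ltac:(exists hzero; reflexivity))
    as [n [c [rho [Wc [Hrho Hd]]]]].
  (* approximate u as the difference of approximations of c + u and of c *)
  exists (2 * INR n), rho. pose proof (pos_INR n). split; [lra|]. split; [exact Hrho|].
  intros u Wu Hu eps Heps.
  destruct (Hd (hadd c u)) with (eps := eps / 2) as [a1 [[h1 [Hh1 ->]] H1]].
  { replace (hadd c u) with (hsub c (hsub hzero u)) by vec_eq.
    apply range_sub; [exact Wc|]. apply range_sub; [exists hzero|]; auto.
    rewrite (lin_0 T) by apply HT. reflexivity. }
  { replace (hsub (hadd c u) c) with u by vec_eq. exact Hu. }
  { lra. }
  destruct (Hd c) with (eps := eps / 2) as [a2 [[h2 [Hh2 ->]] H2]];
    [exact Wc | rewrite hsub_diag, hnorm_zero; lra | lra |].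
  exists (hsub h1 h2). split; [pose proof (hnorm_sub_le h1 h2); lra|].
  rewrite lin_sub by apply HT.
  replace (hsub u (hsub (T h1) (T h2))) with (hsub (hsub (hadd c u) (T h1)) (hsub c (T h2)))
    by vec_eq.
  pose proof (hnorm_sub_le (hsub (hadd c u) (T h1)) (hsub c (T h2))). lra.
Qed.

Lemma range_halving : exists C, 0 <= C /\ forall y, range y ->
  exists h, hnorm h <= C * hnorm y /\ hnorm (hsub y (T h)) <= hnorm y / 2.
Proof.
  destruct range_dense_near_origin as [C [rho [HC [Hrho Hd]]]].
  exists (2 * C / rho). split; [apply Rmult_le_pos; [lra | apply Rlt_le, Rinv_0_lt_compat; lra]|].
  intros y Wy.
  destruct (Req_dec (hnorm y) 0) as [E0|E0].
  { apply hnorm_eq0 in E0. subst y. exists hzero.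
    rewrite (lin_0 T), hsub_diag, !hnorm_zero by apply HT. split; [right; ring | lra]. }
  pose proof (hnorm_ge0 y).
  (* rescale y into the ball of radius rho, approximate, and scale back *)
  set (s := rho / (2 * hnorm y)).
  assert (Hs : s > 0) by (unfold s; apply Rdiv_lt_0_compat; lra).
  destruct (Hd (hscal s y)) with (eps := rho / 4) as [h [Hh1 Hh2]].
  - apply range_scal, Wy.
  - rewrite hnorm_scal, Rabs_right by lra. unfold s. field_simplify; lra.
  - lra.
  - assert (Hsinv : / s = 2 * hnorm y / rho) by (unfold s; field; lra).
    assert (0 < / s) by (apply Rinv_0_lt_compat; lra).
    exists (hscal (/ s) h). split.
    + rewrite hnorm_scal, Rabs_right, Hsinv by lra.
      apply Rle_trans with (2 * hnorm y / rho * C); [apply Rmult_le_compat_l; lra|].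
      right. field. lra.
    + rewrite lin_scal by apply HT.
      replace (hsub y (hscal (/ s) (T h))) with (hscal (/ s) (hsub (hscal s y) (T h)))
        by (vec_eq; lra).
      rewrite hnorm_scal, Rabs_right, Hsinv by lra.
      apply Rle_trans with (2 * hnorm y / rho * (rho / 4)); [apply Rmult_le_compat_l; lra|].
      right. field. lra.
Qed.

Lemma range_solve_bounded : exists C, 0 <= C /\ forall y, range y ->
  exists h, T h = y /\ hnorm h <= C * hnorm y.
Proof.
  destruct range_halving as [C [HC Hhalf]].
  destruct (choice (fun y h =>
    range y -> hnorm h <= C * hnorm y /\ hnorm (hsub y (T h)) <= hnorm y / 2)) as [g Hg].
  { intros y. destruct (classic (range y)) as [Wy|Wn].
    - destruct (Hhalf y Wy) as [h Hh]. exists h. auto.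
    - exists hzero. intros; contradiction. }
  exists (2 * C). split; [lra|]. intros y Wy.
  (* s k is the k-th partial sum of corrections; its residual y - T (s k) halves each step *)
  set (s := fix s (k : nat) : X :=
    match k with O => hzero | S k => hadd (s k) (g (hsub y (T (s k)))) end).
  assert (Hrange : forall k, range (hsub y (T (s k))))
    by (intros k; apply range_sub; [exact Wy | exists (s k); reflexivity]).
  assert (Hres : forall k, hnorm (hsub y (T (s k))) <= hnorm y * (/2) ^ k).
  { induction k as [|k IHk]; simpl.
    - rewrite (lin_0 T) by apply HT. replace (hsub y hzero) with y by vec_eq. lra.
    - rewrite lin_add by apply HT.
      replace (hsub y (hadd (T (s k)) (T (g (hsub y (T (s k)))))))
        with (hsub (hsub y (T (s k))) (T (g (hsub y (T (s k)))))) by vec_eq.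
      destruct (Hg _ (Hrange k)) as [_ Hk]. lra. }
  destruct (geometric_cauchy s (C * hnorm y)) as [h Hh].
  { intros k. simpl. replace (hsub (s k) (hadd (s k) (g (hsub y (T (s k))))))
      with (hopp (g (hsub y (T (s k))))) by vec_eq.
    rewrite hnorm_opp. destruct (Hg _ (Hrange k)) as [Hk _].
    eapply Rle_trans; [exact Hk|]. rewrite Rmult_assoc. apply Rmult_le_compat_l; auto. }
  exists h. split.
  - destruct (bl_norm_le T HT) as [M [HM0 HM]].
    symmetry. apply hsub_eq0, (zero_of_geometric _ (hnorm y + M * (2 * C * hnorm y))). intros n.
    replace (hsub y (T h)) with (hadd (hsub y (T (s n))) (T (hsub (s n) h)))
      by (rewrite lin_sub by apply HT; vec_eq).
    pose proof (hnorm_triangle (hsub y (T (s n))) (T (hsub (s n) h))).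
    pose proof (HM (hsub (s n) h)). pose proof (Hh n). pose proof (Hres n).
    assert (M * hnorm (hsub (s n) h) <= M * (2 * C * hnorm y * (/2) ^ n))
      by (apply Rmult_le_compat_l; lra).
    lra.
  - specialize (Hh O). simpl in Hh. rewrite hnorm_sub_sym in Hh.
    replace (hsub h hzero) with h in Hh by vec_eq. lra.
Qed.

Lemma bounded_below : injective_op T -> exists C, 0 <= C /\ forall x, hnorm x <= C * hnorm (T x).
Proof.
  intros Hinj. destruct range_solve_bounded as [C [HC Hsolve]].
  exists C. split; [exact HC|]. intros x.
  destruct (Hsolve (T x)) as [h [Eh Hh]]; [exists x; reflexivity|].
  apply Hinj in Eh. subst h. exact Hh.
Qed.
End BoundedBelow.

(** * Least-squares solutions and the pseudo-inverse *)

Definition lsq_solution {X Y : HilbertSpace} (A : X -> Y) (v : Y) (u : X) : Prop :=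
  forall x, hinner (hsub v (A u)) (A x) = 0.

Section LeastSquares.
Context {X Y : HilbertSpace}.
Variable A : X -> Y.
Hypothesis HA : is_bounded_linear A.

Lemma lsq_exists v : closed_image A -> exists u, lsq_solution A v u.
Proof.
  intros Hcl.
  assert (Hsub : closed_subspace (fun y => exists x, y = A x)).
  { destruct HA as [HL _]. repeat split.
    - exists hzero. rewrite lin_0; auto.
    - intros y z [a ->] [b ->]. exists (hadd a b). rewrite lin_add; auto.
    - intros s y [a ->]. exists (hscal s a). rewrite lin_scal; auto.
    - intros y Hy. apply Hcl. intros eps He. destruct (Hy eps He) as [z [[x ->] Hz]].
      exists x; auto. }
  destruct (projection _ Hsub v) as [p [[u ->] Hp]].
  exists u. intros x. apply Hp. exists x; auto.
Qed.

Lemma lsq_normal_eq v u : lsq_solution A v u <-> adjoint A (A u) = adjoint A v.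
Proof.
  split.
  - intros Hu. apply eq_by_inner. intros x. rewrite <- !adjoint_spec by auto.
    specialize (Hu x). rewrite hinner_subl in Hu.
    rewrite (hinner_sym (A x) v), (hinner_sym (A x) (A u)). lra.
  - intros E x. rewrite hinner_sym, hinner_subr, !adjoint_spec, E by auto. ring.
Qed.

Lemma lsq_norm_le v u : lsq_solution A v u ->
  hnorm (A u) <= hnorm v /\ hnorm (hsub v (A u)) <= hnorm v.
Proof.
  intros Hu. specialize (Hu u).
  pose proof (hnorm_sq_add (hsub v (A u)) (A u)) as E.
  rewrite hsub_add_cancel, Hu in E.
  pose proof (hnorm_ge0 v). pose proof (hnorm_ge0 (A u)). pose proof (hnorm_ge0 (hsub v (A u))).
  split; nra.
Qed.

Hypothesis A_inj : injective_op A.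
Hypothesis A_closed : closed_image A.

Lemma dagger_lsq y : lsq_solution A y (dagger A y).
Proof.
  apply lsq_normal_eq. unfold dagger. apply epsilon_spec.
  destruct (lsq_exists y A_closed) as [u Hu]. exists u. apply lsq_normal_eq, Hu.
Qed.

Lemma lsq_unique v u u' : lsq_solution A v u -> lsq_solution A v u' -> u = u'.
Proof.
  intros Hu Hu'. specialize (Hu (hsub u u')). specialize (Hu' (hsub u u')).
  rewrite hinner_subl in Hu, Hu'. rewrite (lin_sub A) in * by apply HA.
  apply A_inj, hsub_eq0, hinner_def. rewrite hinner_subl. lra.
Qed.

Lemma dagger_left_inverse h : dagger A (A h) = h.
Proof.
  apply (lsq_unique (A h)); [apply dagger_lsq|].
  intros x. rewrite hsub_diag, hinner_0l. reflexivity.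
Qed.

Lemma dagger_scal a y : dagger A (hscal a y) = hscal a (dagger A y).
Proof.
  apply (lsq_unique (hscal a y)); [apply dagger_lsq|].
  intros x. rewrite lin_scal by apply HA.
  replace (hsub (hscal a y) (hscal a (A (dagger A y)))) with (hscal a (hsub y (A (dagger A y))))
    by vec_eq.
  rewrite hinner_scal, (dagger_lsq y x). ring.
Qed.

Lemma dagger_unit_bound : exists C, forall y, hnorm y <= 1 -> hnorm (dagger A y) <= C.
Proof.
  destruct (bounded_below A HA A_closed A_inj) as [C [HC HCb]].
  exists C. intros y Hy. eapply Rle_trans; [apply HCb|].
  pose proof (lsq_norm_le _ _ (dagger_lsq y)) as [Hle _]. nra.
Qed.

Lemma norm_le_dagger h : hnorm h <= opnorm (dagger A) * hnorm (A h).
Proof.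
  destruct dagger_unit_bound as [C HB].
  rewrite <- (dagger_left_inverse h) at 1.
  apply (hnorm_le_opnorm (dagger A) C HB dagger_scal).
Qed.

Lemma opnorm_dagger_ge0 : 0 <= opnorm (dagger A).
Proof. destruct dagger_unit_bound as [C HB]. apply (opnorm_ge0 _ C HB). Qed.
End LeastSquares.

(** * A second-order Taylor bound *)

Section TaylorRemainder.
Context {X Y : HilbertSpace}.
Variable F : X -> Y.
Variable F' : X -> X -> Y.

Definition frechet_at (z : X) : Prop :=
  is_linear (F' z) /\
  forall eps, eps > 0 -> exists d, d > 0 /\ forall g, hnorm g < d ->
    hnorm (hsub (hsub (F (hadd z g)) (F z)) (F' z g)) <= eps * hnorm g.

Lemma frechet_inner_derivable (x h : X) (y : Y) (s : R) :
  frechet_at (hadd x (hscal s h)) ->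
  derivable_pt_lim (fun t => hinner (F (hadd x (hscal t h))) y) s
    (hinner (F' (hadd x (hscal s h)) h) y).
Proof.
  set (z := hadd x (hscal s h)). intros [Hlin Hdiff] eps Heps.
  set (n := hnorm h). set (m := hnorm y).
  assert (Hn : 0 <= n) by apply hnorm_ge0. assert (Hm : 0 <= m) by apply hnorm_ge0.
  destruct (Hdiff (eps / (2 * (n * m + 1)))) as [d [Hd Hdd]].
  { apply Rdiv_lt_0_compat; nra. }
  assert (Hd' : 0 < d / (n + 1)) by (apply Rdiv_lt_0_compat; lra).
  exists (mkposreal _ Hd'). simpl. intros sg Hsg0 Hsg.
  assert (Hsgn : Rabs sg * n < d).
  { apply Rmult_lt_compat_r with (r := n + 1) in Hsg; [|lra].
    unfold Rdiv in Hsg. rewrite Rmult_assoc, Rinv_l, Rmult_1_r in Hsg by lra.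
    pose proof (Rabs_pos sg). nra. }
  specialize (Hdd (hscal sg h)). rewrite hnorm_scal in Hdd. specialize (Hdd Hsgn). fold n in Hdd.
  replace (hadd x (hscal (s + sg) h)) with (hadd z (hscal sg h)) by (unfold z; vec_eq).
  fold z.
  replace ((hinner (F (hadd z (hscal sg h))) y - hinner (F z) y) / sg - hinner (F' z h) y)
    with (hinner (hsub (hsub (F (hadd z (hscal sg h))) (F z)) (F' z (hscal sg h))) y / sg)
    by (rewrite (lin_scal (F' z)), !hinner_subl, hinner_scal by exact Hlin; field; exact Hsg0).
  unfold Rdiv. rewrite Rabs_mult, Rabs_inv.
  pose proof (hinner_abs_le (hsub (hsub (F (hadd z (hscal sg h))) (F z)) (F' z (hscal sg h))) y).
  fold m in H. pose proof (Rabs_pos sg). pose proof (Rabs_no_R0 sg Hsg0).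
  assert (Hq : / Rabs sg > 0) by (apply Rinv_0_lt_compat; lra).
  apply Rle_lt_trans with (eps / (2 * (n * m + 1)) * (n * m)).
  - apply Rmult_le_reg_r with (r := Rabs sg); [lra|].
    rewrite Rmult_assoc, Rinv_l, Rmult_1_r by lra.
    apply Rmult_le_compat_r with (r := m) in Hdd; [|exact Hm].
    eapply Rle_trans; [exact H|]. eapply Rle_trans; [exact Hdd|]. right; ring.
  - apply Rle_lt_trans with (eps / (2 * (n * m + 1)) * (n * m + 1)).
    + apply Rmult_le_compat_l; [apply Rlt_le, Rdiv_lt_0_compat; nra | lra].
    + replace (eps / (2 * (n * m + 1)) * (n * m + 1)) with (eps / 2) by (field; nra). lra.
Qed.

Section Segment.
Variables (x h : X) (L : R).
Hypothesis HL : 0 <= L.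
Hypothesis seg_frechet : forall s, 0 <= s <= 1 -> frechet_at (hadd x (hscal s h)).
Hypothesis seg_lipschitz : forall s, 0 <= s <= 1 ->
  hnorm (hsub (F' (hadd x (hscal s h)) h) (F' x h)) <= L * s * (hnorm h * hnorm h).

Let rem : Y := hsub (hsub (F (hadd x h)) (F x)) (F' x h).

Lemma remainder_inner_le y : hinner rem y <= L / 2 * (hnorm h * hnorm h) * hnorm y.
Proof.
  set (a := hinner (F' x h) y). set (b := L / 2 * (hnorm h * hnorm h) * hnorm y).
  set (quad := (mult_real_fct a id + mult_real_fct b Rsqr)%F).
  (* psi t = <F (x + t h), y> - a t - b t^2 has a nonpositive derivative on [0, 1] *)
  set (psi := fun t => hinner (F (hadd x (hscal t h))) y - quad t).
  set (dpsi := fun t => hinner (F' (hadd x (hscal t h)) h) y - (a * 1 + b * (2 * t))).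
  destruct (MVT_cor2 psi dpsi 0 1) as [c [Hc Hc01]]; [lra| |].
  - intros t Ht. apply derivable_pt_lim_minus.
    + apply frechet_inner_derivable, seg_frechet, Ht.
    + apply derivable_pt_lim_plus; apply derivable_pt_lim_scal;
        [apply derivable_pt_lim_id | apply derivable_pt_lim_Rsqr].
  - assert (Hd : dpsi c <= 0).
    { unfold dpsi. replace (hinner (F' (hadd x (hscal c h)) h) y - (a * 1 + b * (2 * c)))
        with (hinner (hsub (F' (hadd x (hscal c h)) h) (F' x h)) y - 2 * b * c)
        by (unfold a; rewrite hinner_subl; ring).
      pose proof (hinner_le (hsub (F' (hadd x (hscal c h)) h) (F' x h)) y).
      pose proof (seg_lipschitz c ltac:(lra)). pose proof (hnorm_ge0 y).
      unfold b. nra. }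
    unfold psi, quad, mult_real_fct, id, Rsqr, plus_fct in Hc.
    rewrite hscal_1, hscal_0l, hadd_0r in Hc.
    unfold rem. rewrite !hinner_subl. fold a. fold b. nra.
Qed.

Lemma taylor_remainder_le : hnorm rem <= L / 2 * hnorm h * hnorm h.
Proof.
  pose proof (remainder_inner_le rem) as H. rewrite <- hnorm_sq in H.
  pose proof (hnorm_ge0 rem).
  destruct (Req_dec (hnorm rem) 0) as [E|E].
  - rewrite E. pose proof (hnorm_ge0 h). nra.
  - apply Rmult_le_reg_r with (r := hnorm rem); nra.
Qed.
End Segment.
End TaylorRemainder.

(** * The iteration *)

Section PerturbedLeastSquares.
Context {X Y : HilbertSpace}.
Variables (A0 A : X -> Y) (beta delta : R).
Hypothesis beta_ge0 : 0 <= beta.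
Hypothesis delta_ge0 : 0 <= delta.
Hypothesis A0_below : forall g, hnorm g <= beta * hnorm (A0 g).
Hypothesis A_close : forall g, hnorm (hsub (A g) (A0 g)) <= delta * hnorm g.

Lemma perturbed_below g : (1 - beta * delta) * hnorm g <= beta * hnorm (A g).
Proof.
  pose proof (A0_below g). pose proof (hnorm_rev_triangle (A0 g) (A g)).
  rewrite hnorm_sub_sym in H0. pose proof (A_close g). pose proof (hnorm_ge0 g).
  assert (beta * hnorm (A0 g) <= beta * (hnorm (A g) + delta * hnorm g))
    by (apply Rmult_le_compat_l; lra).
  nra.
Qed.

Lemma lsq_perturbed_bound v u :
  lsq_solution A v u -> hnorm u * (1 - beta * delta) <= beta * hnorm v.
Proof.
  intros Hu. pose proof (perturbed_below u). destruct (lsq_norm_le A v u Hu) as [Hle _].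
  pose proof (hnorm_ge0 u). nra.
Qed.

Lemma lsq_perturbed_orthogonal_bound v u : beta * delta < 1 ->
  (forall g, hinner (A0 g) v = 0) -> lsq_solution A v u ->
  hnorm u * (1 - beta * delta) <= beta * beta * delta * hnorm v.
Proof.
  intros Hsmall Hv Hu.
  set (p := A u). set (q := A0 u). set (n := hnorm u). set (a := hnorm p). set (c := hnorm v).
  assert (Hp0 : hinner (hsub v p) p = 0) by apply Hu.
  assert (Hq0 : hinner q v = 0) by apply Hv.
  destruct (lsq_norm_le A v u Hu) as [_ Hsv]. fold p c in Hsv.
  (* |q|^2 = -|p|^2 + |p - q|^2 + 2 <v - p, p - q>, using v _|_ q and v - p _|_ p *)
  assert (Id : hnorm q * hnorm q =
      - (a * a) + hnorm (hsub p q) * hnorm (hsub p q) + 2 * hinner (hsub v p) (hsub p q)).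
  { unfold a. rewrite !hnorm_sq. rewrite hinner_subl in Hp0.
    rewrite !hinner_subl, !hinner_subr.
    pose proof (hinner_sym p q). pose proof (hinner_sym v p). pose proof (hinner_sym v q).
    lra. }
  pose proof (A_close u) as Hpq. fold p q n in Hpq.
  pose proof (hinner_le (hsub v p) (hsub p q)).
  pose proof (hnorm_ge0 (hsub p q)). pose proof (hnorm_ge0 (hsub v p)).
  assert (Hn0 : 0 <= n) by apply hnorm_ge0. assert (Ha0 : 0 <= a) by apply hnorm_ge0.
  assert (Hc0 : 0 <= c) by apply hnorm_ge0.
  assert (Hdn : 0 <= delta * n) by nra.
  assert (Hin : hinner (hsub v p) (hsub p q) <= c * (delta * n))
    by (eapply Rle_trans; [eassumption | apply Rmult_le_compat; auto]).
  assert (Hq2 : hnorm q * hnorm q <= - (a * a) + (delta * n) * (delta * n) + 2 * c * (delta * n))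
    by nra.
  pose proof (A0_below u) as Hn1. fold q n in Hn1.
  assert (Hn2 : n * n <= beta * beta * (hnorm q * hnorm q)) by (pose proof (hnorm_ge0 q); nra).
  pose proof (perturbed_below u) as Hb1. fold p n a in Hb1.
  set (den := 1 - beta * delta) in *.
  assert (Hb2 : den * n * (den * n) <= beta * a * (beta * a)).
  { assert (0 <= den * n) by (unfold den; nra). apply Rmult_le_compat; lra. }
  assert (Hfin : n * n * (2 * den) <= 2 * (beta * beta * c * delta) * n).
  { assert (beta * beta * (hnorm q * hnorm q) <=
            beta * beta * (- (a * a) + (delta * n) * (delta * n) + 2 * c * (delta * n)))
      by (apply Rmult_le_compat_l; nra).
    unfold den in *. nra. }
  destruct (Req_dec n 0) as [N0|N0].
  - rewrite N0, Rmult_0_l. repeat apply Rmult_le_pos; lra.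
  - apply Rmult_le_reg_l with (r := 2 * n); nra.
Qed.
End PerturbedLeastSquares.

Definition normal_op {X Y : HilbertSpace} (Binv : X -> X) (A : X -> Y) (g : X) : X :=
  Binv (adjoint A (A g)).

Lemma step_error_decomposition {X Y : HilbertSpace} (A : X -> Y) (Bk Binv : X -> X)
  (xs xk xk1 : X) (Fxs Fxk : Y) (u1 u2 : X) :
  is_bounded_linear A -> is_linear Binv -> (forall v, Binv (Bk v) = v) ->
  Bk (hsub xk1 xk) = hopp (adjoint A Fxk) ->
  lsq_solution A Fxs u1 -> lsq_solution A (hsub (hadd Fxs (A (hsub xk xs))) Fxk) u2 ->
  let M := normal_op Binv A in
  hsub xk1 xs = hadd (hsub (hsub (hsub xk xs) (M (hsub xk xs))) (M u1)) (M u2).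
Proof.
  intros HA HBinv HBB Hit Hu1 Hu2 M.
  apply (lsq_normal_eq A HA) in Hu1, Hu2.
  pose proof (adjoint_bl A HA) as [HAdj _].
  assert (Hstep : hsub xk1 xk = hopp (Binv (adjoint A Fxk)))
    by (rewrite <- (HBB (hsub xk1 xk)), Hit, (lin_opp Binv); auto).
  replace Fxk with (hsub (hadd Fxs (A (hsub xk xs))) (hsub (hadd Fxs (A (hsub xk xs))) Fxk))
    in Hstep by vec_eq.
  rewrite (lin_sub (adjoint A)), (lin_add (adjoint A)), <- Hu1, <- Hu2 in Hstep by exact HAdj.
  rewrite !(lin_sub Binv), (lin_add Binv) in Hstep by exact HBinv.
  unfold M, normal_op.
  replace (hsub xk1 xs) with (hadd (hsub xk1 xk) (hsub xk xs)) by vec_eq.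
  rewrite Hstep. vec_eq.
Qed.

Section RateEstimates.
Variables (alpha w1 w2 : R).
Hypothesis alpha_ge0 : 0 <= alpha.
Hypothesis w2_ge0 : 0 <= w2.
Hypothesis w2_lt_w1 : w2 < w1.
Hypothesis rate_lt_1 : w1 * alpha + w2 < 1.

(* Rocq's [x / 0 = 0] makes the radius 0 when [beta = 0], so a nonempty ball forces [beta > 0]. *)
Lemma lt_radius_scaled (beta K e0 : R) : 0 <= beta -> K > 0 -> 0 <= e0 ->
  e0 < (2 * (1 - w2) - 2 * alpha * w1) / (beta * K * (2 + w1 - 2 * w2)) ->
  beta * K * e0 * (2 + w1 - 2 * w2) < 2 * (1 - w2) - 2 * alpha * w1.
Proof.
  intros Hb HK He0 Hlt.
  destruct (Req_dec beta 0) as [E|E].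
  { rewrite E, !Rmult_0_l in Hlt. unfold Rdiv in Hlt. rewrite Rinv_0, Rmult_0_r in Hlt.
    exfalso; lra. }
  assert (Hbpos : 0 < beta) by (destruct (Rle_lt_or_eq_dec 0 beta Hb); [assumption | congruence]).
  assert (0 <= w1 * alpha) by (apply Rmult_le_pos; lra).
  assert (Hden : 0 < beta * K * (2 + w1 - 2 * w2))
    by (apply Rmult_lt_0_compat; [apply Rmult_lt_0_compat|]; lra).
  apply Rmult_lt_compat_r with (r := beta * K * (2 + w1 - 2 * w2)) in Hlt; [|exact Hden].
  replace ((2 * (1 - w2) - 2 * alpha * w1) / (beta * K * (2 + w1 - 2 * w2)) *
    (beta * K * (2 + w1 - 2 * w2))) with (2 * (1 - w2) - 2 * alpha * w1) in Hlt by (field; lra).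
  replace (beta * K * e0 * (2 + w1 - 2 * w2)) with (e0 * (beta * K * (2 + w1 - 2 * w2))) by ring.
  exact Hlt.
Qed.

Lemma contraction_factor_lt_1 (t0 : R) : 0 <= t0 ->
  t0 * (2 + w1 - 2 * w2) < 2 * (1 - w2) - 2 * alpha * w1 ->
  t0 < 1 /\ w1 * t0 / (2 * (1 - t0)) + (w1 * alpha / (1 - t0) + w2) < 1.
Proof.
  intros Ht0 Hlt.
  assert (0 <= w1 * alpha) by (apply Rmult_le_pos; lra).
  assert (Ht1 : t0 < 1) by nra.
  split; [exact Ht1|].
  apply Rmult_lt_reg_r with (r := 2 * (1 - t0)); [lra|].
  replace ((w1 * t0 / (2 * (1 - t0)) + (w1 * alpha / (1 - t0) + w2)) * (2 * (1 - t0)))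
    with (w1 * t0 + 2 * w1 * alpha + 2 * w2 * (1 - t0)) by (field; lra).
  lra.
Qed.
End RateEstimates.

Lemma iteration_rate (c beta K w1 w2 e0 : R) :
  0 <= c -> 0 <= beta -> K > 0 -> 0 <= e0 -> 0 <= w2 -> w2 < w1 ->
  w1 * (sqrt 2 * c * beta ^ 2 * K) + w2 < 1 ->
  e0 < (2 * (1 - w2) - 2 * sqrt 2 * c * K * beta ^ 2 * w1) / (beta * K * (2 + w1 - 2 * w2)) ->
  beta * K * e0 < 1 /\ 0 <= beta * w1 * K / (2 * (1 - beta * K * e0)) /\
  0 <= beta * w1 * K / (2 * (1 - beta * K * e0)) * e0 +
       (w1 * sqrt 2 * c * beta ^ 2 * K / (1 - beta * K * e0) + w2) < 1.
Proof.
  intros Hc Hb HK He0 Hw2 Hw12 Hrate Hr.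
  set (alpha := sqrt 2 * c * beta ^ 2 * K) in *.
  assert (Halpha : 0 <= alpha) by (unfold alpha; pose proof (sqrt_pos 2);
    pose proof (pow2_ge_0 beta); repeat apply Rmult_le_pos; lra).
  replace (2 * sqrt 2 * c * K * beta ^ 2 * w1) with (2 * alpha * w1) in Hr by (unfold alpha; ring).
  set (t0 := beta * K * e0).
  assert (Ht0 : 0 <= t0) by (unfold t0; apply Rmult_le_pos; [apply Rmult_le_pos|]; lra).
  destruct (contraction_factor_lt_1 alpha w1 w2 Halpha Hw2 Hw12 Hrate t0 Ht0
    (lt_radius_scaled alpha w1 w2 Halpha Hw2 Hw12 Hrate beta K e0 Hb HK He0 Hr)) as [Ht1 Hq].
  assert (0 < / (1 - t0)) by (apply Rinv_0_lt_compat; lra).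
  assert (0 < / (2 * (1 - t0))) by (apply Rinv_0_lt_compat; lra).
  split; [exact Ht1|]. split; [unfold Rdiv; repeat apply Rmult_le_pos; lra|].
  replace (beta * w1 * K / (2 * (1 - t0)) * e0 + (w1 * sqrt 2 * c * beta ^ 2 * K / (1 - t0) + w2))
    with (w1 * t0 / (2 * (1 - t0)) + (w1 * alpha / (1 - t0) + w2))
    by (unfold t0, alpha; field; fold t0; lra).
  split; [|exact Hq].
  assert (0 <= w1 * t0 * / (2 * (1 - t0))) by (repeat apply Rmult_le_pos; lra).
  assert (0 <= w1 * alpha * / (1 - t0)) by (apply Rmult_le_pos; [apply Rmult_le_pos|]; lra).
  unfold Rdiv. lra.
Qed.

Lemma step_bound_mono (beta K c w1 w2 e e0 : R) :
  0 <= beta -> 0 <= K -> 0 <= c -> 0 <= w1 -> 0 <= e <= e0 -> beta * K * e0 < 1 ->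
  w2 * e + w1 * (beta * K * e * e / 2 + beta * beta * c * K * e) / (1 - beta * K * e) <=
  beta * w1 * K / (2 * (1 - beta * K * e0)) * e ^ 2
  + (w1 * sqrt 2 * c * beta ^ 2 * K / (1 - beta * K * e0) + w2) * e.
Proof.
  intros Hb HK Hc Hw1 [He He0] Ht0.
  assert (Hs2 : 1 <= sqrt 2) by (rewrite <- sqrt_1; apply sqrt_le_1_alt; lra).
  assert (Hbk : beta * K * e <= beta * K * e0)
    by (apply Rmult_le_compat_l; [apply Rmult_le_pos|]; lra).
  assert (Hinv : / (1 - beta * K * e) <= / (1 - beta * K * e0)) by (apply Rinv_le_contravar; lra).
  assert (Hnum : 0 <= w1 * (beta * K * e * e / 2 + beta * beta * c * K * e))
    by (apply Rmult_le_pos; [lra|]; apply Rplus_le_le_0_compat; repeat apply Rmult_le_pos; lra).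
  apply Rle_trans with (w2 * e + w1 * (beta * K * e * e / 2 + sqrt 2 * beta * beta * c * K * e)
                                    / (1 - beta * K * e0)).
  - unfold Rdiv. apply Rplus_le_compat_l.
    apply Rle_trans with
      (w1 * (beta * K * e * e / 2 + beta * beta * c * K * e) * / (1 - beta * K * e0));
      [apply Rmult_le_compat_l; assumption|].
    apply Rmult_le_compat_r; [apply Rlt_le, Rinv_0_lt_compat; lra|].
    apply Rmult_le_compat_l; [lra|]. apply Rplus_le_compat_l.
    assert (0 <= beta * beta * c * K * e) by (repeat apply Rmult_le_pos; lra). nra.
  - right. field. lra.
Qed.

Lemma quadratic_recursion_geometric (d : nat -> R) (a b e0 : R) :
  0 <= a -> (forall n, 0 <= d n) -> d O <= e0 -> 0 <= a * e0 + b < 1 ->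
  (forall n, d n <= e0 -> d (S n) <= a * d n ^ 2 + b * d n) ->
  forall n, d n <= (a * e0 + b) ^ n * e0 <= e0.
Proof.
  intros Ha Hd Hd0 [Hq0 Hq1] Hstep.
  assert (He0 : 0 <= e0) by (pose proof (Hd O); lra).
  assert (Hqn : forall n, (a * e0 + b) ^ n <= 1)
    by (intros n; rewrite <- (pow1 n); apply pow_incr; lra).
  assert (Hqe : forall n, (a * e0 + b) ^ n * e0 <= e0) by (intros n; pose proof (Hqn n); nra).
  intros n. split; [|apply Hqe].
  induction n as [|n IHn]; [simpl; lra|].
  pose proof (Hqe n). pose proof (Hstep n ltac:(lra)). pose proof (Hd n). simpl.
  assert (a * (d n * d n) <= a * (e0 * d n)) by (apply Rmult_le_compat_l; nra).
  assert (a * d n ^ 2 + b * d n <= (a * e0 + b) * d n) by (simpl; lra).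
  assert ((a * e0 + b) * d n <= (a * e0 + b) * ((a * e0 + b) ^ n * e0))
    by (apply Rmult_le_compat_l; lra).
  lra.
Qed.


Section GaussNewtonStep.
Context {X Y : HilbertSpace}.
Variables (O : X -> Prop) (F : X -> Y) (F' : X -> X -> Y).
Hypothesis HF : C1_on O F F'.
Hypothesis F'_closed : forall x, O x -> closed_image (F' x).
Variables (xs : X) (kap K beta : R).
Hypothesis K_ge0 : 0 <= K.
Hypothesis beta_ge0 : 0 <= beta.
Hypothesis ball_in_O : forall y, ball xs kap y -> O y.
Hypothesis F'_lipschitz : forall y z, ball xs kap y -> ball xs kap z ->
  opnorm (fun h => hsub (F' y h) (F' z h)) <= K * hnorm (hsub y z).
Hypothesis F'_xs_below : forall h, hnorm h <= beta * hnorm (F' xs h).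
Hypothesis grad_xs : adjoint (F' xs) (F xs) = hzero.

Lemma F'_bl x : O x -> is_bounded_linear (F' x).
Proof. intros Hx. apply (proj1 HF x Hx). Qed.

Lemma F'_lipschitz_apply y z g : ball xs kap y -> ball xs kap z ->
  hnorm (hsub (F' y g) (F' z g)) <= K * hnorm (hsub y z) * hnorm g.
Proof.
  intros Hy Hz. apply (bl_norm_le_opnorm (fun h => hsub (F' y h) (F' z h))).
  - apply bl_sub; apply F'_bl, ball_in_O; assumption.
  - apply F'_lipschitz; assumption.
Qed.

Lemma ball_segment xk s : ball xs kap xk -> 0 <= s <= 1 ->
  ball xs kap (hadd xk (hscal s (hsub xs xk))).
Proof.
  unfold ball. intros Hxk Hs.
  replace (hsub (hadd xk (hscal s (hsub xs xk))) xs) with (hscal (1 - s) (hsub xk xs)) by vec_eq.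
  rewrite hnorm_scal, Rabs_right by lra. pose proof (hnorm_ge0 (hsub xk xs)). nra.
Qed.

Lemma taylor_at_solution xk : ball xs kap xk ->
  hnorm (hsub (hsub (F xs) (F xk)) (F' xk (hsub xs xk))) <=
  K / 2 * hnorm (hsub xk xs) * hnorm (hsub xk xs).
Proof.
  intros Hxk. rewrite (hnorm_sub_sym xk xs).
  replace (F xs) with (F (hadd xk (hsub xs xk))) by (f_equal; vec_eq).
  apply taylor_remainder_le; [exact K_ge0| |].
  - intros s Hs. destruct (proj1 HF _ (ball_in_O _ (ball_segment xk s Hxk Hs))) as [[Hl _] Hd].
    split; assumption.
  - intros s Hs. eapply Rle_trans; [apply F'_lipschitz_apply; [apply ball_segment|]; auto|].
    replace (hsub (hadd xk (hscal s (hsub xs xk))) xk) with (hscal s (hsub xs xk)) by vec_eq.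
    rewrite hnorm_scal, Rabs_right by lra. right; ring.
Qed.

Lemma ball_center xk : ball xs kap xk -> ball xs kap xs.
Proof.
  unfold ball. intros H. rewrite hsub_diag, hnorm_zero.
  pose proof (hnorm_ge0 (hsub xk xs)). lra.
Qed.

Lemma F'_close_to_solution xk g : ball xs kap xk ->
  hnorm (hsub (F' xk g) (F' xs g)) <= K * hnorm (hsub xk xs) * hnorm g.
Proof. intros Hxk. apply F'_lipschitz_apply; [exact Hxk | apply (ball_center xk Hxk)]. Qed.

Lemma lsq_residual_small xk u : ball xs kap xk -> beta * K * hnorm (hsub xk xs) < 1 ->
  lsq_solution (F' xk) (F xs) u ->
  hnorm u * (1 - beta * (K * hnorm (hsub xk xs))) <=
  beta * beta * (K * hnorm (hsub xk xs)) * hnorm (F xs).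
Proof.
  intros Hxk Hsmall Hu. pose proof (hnorm_ge0 (hsub xk xs)).
  apply (lsq_perturbed_orthogonal_bound (F' xs) (F' xk)); try assumption.
  - apply Rmult_le_pos; assumption.
  - intros g. apply F'_close_to_solution, Hxk.
  - rewrite <- Rmult_assoc. exact Hsmall.
  - intros g. rewrite (adjoint_spec _ (F'_bl xs (ball_in_O _ (ball_center xk Hxk)))), grad_xs.
    apply hinner_0r.
Qed.

Lemma lsq_remainder_small xk u : ball xs kap xk ->
  lsq_solution (F' xk) (hsub (hadd (F xs) (F' xk (hsub xk xs))) (F xk)) u ->
  hnorm u * (1 - beta * (K * hnorm (hsub xk xs))) <=
  beta * (K / 2 * hnorm (hsub xk xs) * hnorm (hsub xk xs)).
Proof.
  intros Hxk Hu.
  eapply Rle_trans; [apply (lsq_perturbed_bound (F' xs) (F' xk)); try eassumption|].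
  - intros g. apply F'_close_to_solution, Hxk.
  - apply Rmult_le_compat_l; [exact beta_ge0|].
    replace (hsub (hadd (F xs) (F' xk (hsub xk xs))) (F xk))
      with (hsub (hsub (F xs) (F xk)) (F' xk (hsub xs xk)))
      by (rewrite !(lin_sub (F' xk)) by apply F'_bl, ball_in_O, Hxk; vec_eq).
    apply taylor_at_solution, Hxk.
Qed.

Lemma gauss_newton_step xk xk1 (Bk Binv : X -> X) (w1 w2 : R) :
  0 <= w1 -> ball xs kap xk -> beta * K * hnorm (hsub xk xs) < 1 ->
  is_bounded_linear Binv -> (forall v, Binv (Bk v) = v) ->
  opnorm (normal_op Binv (F' xk)) <= w1 ->
  opnorm (fun h => hsub (normal_op Binv (F' xk) h) h) <= w2 ->
  Bk (hsub xk1 xk) = hopp (adjoint (F' xk) (F xk)) ->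
  let e := hnorm (hsub xk xs) in
  hnorm (hsub xk1 xs) <=
    w2 * e + w1 * (beta * K * e * e / 2 + beta * beta * hnorm (F xs) * K * e) / (1 - beta * K * e).
Proof.
  intros Hw1 Hxk Hsmall HBinv HBB Hop1 Hop2 Hit e.
  pose proof (F'_bl xk (ball_in_O xk Hxk)) as HA.
  set (M := normal_op Binv (F' xk)).
  assert (HM : is_bounded_linear M) by (apply (bl_comp (fun g => adjoint (F' xk) (F' xk g)));
    [apply bl_comp; [exact HA | apply adjoint_bl, HA] | exact HBinv]).
  pose proof (bl_norm_le_opnorm M w1 HM Hop1) as HM1.
  pose proof (bl_norm_le_opnorm _ w2 (bl_sub _ _ HM bl_id) Hop2 (hsub xk xs)) as HM2.
  simpl in HM2. rewrite hnorm_sub_sym in HM2.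
  destruct (lsq_exists (F' xk) HA (F xs) (F'_closed xk (ball_in_O xk Hxk))) as [u1 Hu1].
  destruct (lsq_exists (F' xk) HA (hsub (hadd (F xs) (F' xk (hsub xk xs))) (F xk))
    (F'_closed xk (ball_in_O xk Hxk))) as [u2 Hu2].
  pose proof (lsq_residual_small xk u1 Hxk Hsmall Hu1) as Hu1b.
  pose proof (lsq_remainder_small xk u2 Hxk Hu2) as Hu2b.
  rewrite (step_error_decomposition (F' xk) Bk Binv xs xk xk1 (F xs) (F xk) u1 u2 HA
    (proj1 HBinv) HBB Hit Hu1 Hu2). fold M. fold e in Hsmall, Hu1b, Hu2b, HM2 |- *.
  set (den := 1 - beta * K * e) in *.
  replace (1 - beta * (K * e)) with den in Hu1b, Hu2b by (unfold den; ring).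
  assert (Hsum : hnorm u1 + hnorm u2 <=
    (beta * K * e * e / 2 + beta * beta * hnorm (F xs) * K * e) / den).
  { apply Rmult_le_reg_r with (r := den); [unfold den; lra|].
    unfold Rdiv. rewrite Rmult_assoc, Rinv_l, Rmult_1_r by (unfold den; lra). nra. }
  pose proof (hnorm_triangle (hsub (hsub (hsub xk xs) (M (hsub xk xs))) (M u1)) (M u2)).
  pose proof (hnorm_sub_le (hsub (hsub xk xs) (M (hsub xk xs))) (M u1)).
  pose proof (HM1 u1). pose proof (HM1 u2).
  assert (w1 * (hnorm u1 + hnorm u2) <=
    w1 * ((beta * K * e * e / 2 + beta * beta * hnorm (F xs) * K * e) / den))
    by (apply Rmult_le_compat_l; assumption).
  unfold Rdiv in *. rewrite (Rmult_assoc w1). lra.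
Qed.

Lemma gauss_newton_step_uniform xk xk1 (Bk Binv : X -> X) (w1 w2 e0 : R) :
  0 <= w1 -> e0 < kap -> beta * K * e0 < 1 -> hnorm (hsub xk xs) <= e0 ->
  is_bounded_linear Binv -> (forall v, Binv (Bk v) = v) ->
  opnorm (normal_op Binv (F' xk)) <= w1 ->
  opnorm (fun h => hsub (normal_op Binv (F' xk) h) h) <= w2 ->
  Bk (hsub xk1 xk) = hopp (adjoint (F' xk) (F xk)) ->
  hnorm (hsub xk1 xs) <=
    beta * w1 * K / (2 * (1 - beta * K * e0)) * hnorm (hsub xk xs) ^ 2
    + (w1 * sqrt 2 * hnorm (F xs) * beta ^ 2 * K / (1 - beta * K * e0) + w2) * hnorm (hsub xk xs).
Proof.
  intros Hw1 Hkap Ht0 Hxk HBinv HBB Hop1 Hop2 Hit.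
  pose proof (hnorm_ge0 (hsub xk xs)).
  eapply Rle_trans; [apply (gauss_newton_step xk xk1 Bk Binv w1 w2); try assumption|].
  - unfold ball. lra.
  - apply Rle_lt_trans with (beta * K * e0); [|exact Ht0].
    apply Rmult_le_compat_l; [apply Rmult_le_pos|]; assumption.
  - apply step_bound_mono; try assumption. apply hnorm_ge0. split; assumption.
Qed.
End GaussNewtonStep.

Lemma kappa_ball {X : HilbertSpace} (xs : X) (Rr : R) (O : X -> Prop) : Rr > 0 ->
  forall y, ball xs (kappa xs Rr O) y -> O y.
Proof.
  intros HR y Hy.
  set (T := fun t => 0 <= t < Rr /\ forall y, ball xs t y -> O y).
  assert (Hl : is_lub T (kappa xs Rr O)).
  { unfold kappa. apply epsilon_spec. destruct (completeness T) as [m Hm].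
    - exists Rr. intros t [Ht _]. lra.
    - exists 0. split; [lra|]. intros z Hz. unfold ball in Hz.
      pose proof (hnorm_ge0 (hsub z xs)). lra.
    - exists m; exact Hm. }
  destruct Hl as [Hub Hlub]. unfold ball in Hy.
  apply NNPP. intros Hn.
  assert (kappa xs Rr O <= hnorm (hsub y xs)); [|lra].
  apply Hlub. intros t [Ht Ht2]. apply Rnot_lt_le. intros Hlt. apply Hn, Ht2, Hlt.
Qed.

Lemma converges_of_geometric {X : HilbertSpace} (u : nat -> X) (l : X) (q e0 : R) :
  0 <= q < 1 -> (forall n, hnorm (hsub (u n) l) <= q ^ n * e0) -> converges_to u l.
Proof.
  intros [Hq0 Hq1] Hu eps Heps.
  destruct (pow_lt_1_zero q ltac:(rewrite Rabs_right; lra) (eps / (Rabs e0 + 1))) as [N HN].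
  { apply Rdiv_lt_0_compat; [lra|]. pose proof (Rabs_pos e0). lra. }
  exists N. intros n Hn. specialize (HN n Hn). specialize (Hu n).
  assert (0 <= q ^ n) by (apply pow_le; lra).
  rewrite Rabs_right in HN by lra. pose proof (Rle_abs e0). pose proof (Rabs_pos e0).
  apply Rmult_lt_compat_r with (r := Rabs e0 + 1) in HN; [|lra].
  replace (eps / (Rabs e0 + 1) * (Rabs e0 + 1)) with eps in HN by (field; lra). nra.
Qed.

Theorem mainTheorem12 (X Y : HilbertSpace) (O : X -> Prop) (F : X -> Y)
  (F' : X -> X -> Y)
  (HO : is_open O) (HF : C1_on O F F')
  (Hcl : forall x, O x -> closed_image (F' x))
  (xs : X) (Rr K w1 w2 : R) (x : nat -> X) (B Binv : nat -> X -> X) :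
  O xs -> Rr > 0 ->
  adjoint (F' xs) (F xs) = hzero ->
  injective_op (F' xs) ->
  K > 0 ->
  let c := hnorm (F xs) in
  let beta := opnorm (dagger (F' xs)) in
  let kap := kappa xs Rr O in
  let alpha := sqrt 2 * c * beta ^ 2 * K in
  alpha < 1 ->
  (forall y z, ball xs kap y -> ball xs kap z ->
     opnorm (fun h => hsub (F' y h) (F' z h)) <= K * hnorm (hsub y z)) ->
  0 <= w2 -> w2 < w1 -> w1 * alpha + w2 < 1 ->
  let r := Rmin kap ((2 * (1 - w2) - 2 * sqrt 2 * c * K * beta ^ 2 * w1)
                      / (beta * K * (2 + w1 - 2 * w2))) in
  ball xs r (x 0%nat) -> x 0%nat <> xs ->
  (forall k, is_bounded_linear (B k) /\ is_bounded_linear (Binv k) /\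
     (forall v, B k (Binv k v) = v) /\ (forall v, Binv k (B k v) = v)) ->
  (forall k, opnorm (fun h => Binv k (adjoint (F' (x k)) (F' (x k) h))) <= w1) ->
  (forall k, opnorm (fun h => hsub (Binv k (adjoint (F' (x k)) (F' (x k) h))) h) <= w2) ->
  (forall k, B k (hsub (x (S k)) (x k)) = hopp (adjoint (F' (x k)) (F (x k)))) ->
  (forall k, O (x k) /\ ball xs r (x k)) /\
  converges_to x xs /\
  (forall k,
     hnorm (hsub (x (S k)) xs) <=
       beta * w1 * K / (2 * (1 - beta * K * hnorm (hsub (x 0%nat) xs)))
         * hnorm (hsub (x k) xs) ^ 2
     + (w1 * sqrt 2 * c * beta ^ 2 * K / (1 - beta * K * hnorm (hsub (x 0%nat) xs)) + w2)
         * hnorm (hsub (x k) xs)).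
Proof.
  intros HOxs HRr Hgrad Hinj HK c beta kap alpha _ HLip Hw2 Hw12 Hrate r Hx0 _ HB Hw1 Hw2' Hit.
  pose proof (proj1 (proj1 HF xs HOxs)) as HAs.
  pose proof (opnorm_dagger_ge0 _ HAs Hinj (Hcl xs HOxs)) as Hbeta. fold beta in Hbeta.
  pose proof (kappa_ball xs Rr O HRr) as Hkap. fold kap in Hkap.
  set (e0 := hnorm (hsub (x 0%nat) xs)) in *.
  assert (Hr0 : e0 < r) by exact Hx0.
  assert (Hkap0 : e0 < kap) by apply (Rlt_le_trans _ _ _ Hr0), Rmin_l.
  destruct (iteration_rate c beta K w1 w2 e0 (hnorm_ge0 _) Hbeta HK (hnorm_ge0 _) Hw2 Hw12 Hrate
    (Rlt_le_trans _ _ _ Hr0 (Rmin_r _ _))) as [Ht0 [Ha Hq]].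
  assert (Hstep : forall k, hnorm (hsub (x k) xs) <= e0 ->
    hnorm (hsub (x (S k)) xs) <=
      beta * w1 * K / (2 * (1 - beta * K * e0)) * hnorm (hsub (x k) xs) ^ 2
      + (w1 * sqrt 2 * c * beta ^ 2 * K / (1 - beta * K * e0) + w2) * hnorm (hsub (x k) xs)).
  { intros k Hk. destruct (HB k) as [_ [HBinv [_ HBB]]].
    apply (gauss_newton_step_uniform O F F' HF Hcl xs kap K beta) with (Bk := B k) (Binv := Binv k);
      try assumption; try lra.
    - intros h. apply (norm_le_dagger _ HAs Hinj (Hcl xs HOxs)).
    - exact (Hw1 k).
    - exact (Hw2' k).
    - exact (Hit k). }
  pose proof (quadratic_recursion_geometric (fun k => hnorm (hsub (x k) xs)) _ _ e0 Ha
    (fun k => hnorm_ge0 _) (Rle_refl e0) Hq Hstep) as Hgeo. cbv beta in Hgeo.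
  split; [|split].
  - intros k. destruct (Hgeo k) as [Hk Hk0]. split; [apply Hkap|]; unfold ball; lra.
  - exact (converges_of_geometric x xs _ e0 Hq (fun k => proj1 (Hgeo k))).
  - intros k. apply Hstep. destruct (Hgeo k). lra.
Qed.
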